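(* Let $(X,\|\cdot\|_X)$ be a strictly convex two-dimensional real normed space such that the set of points of $S_X$ where $\|\cdot\|_X$ is not differentiable is finite. Let $C_X\subset X$ be a piecewise $C^1$ Jordan curve enclosing a convex set, and let $a\in C_X$ be a point at which $C_X$ is differentiable. Define $\operatorname{NDif}(a)=\{b\in C_X: t\mapsto\|\gamma_a(t)-b\|_X \text{ is not differentiable at } t=0\}$. Then $\operatorname{NDif}(a)$ is the union of a finite set and at most one segment, and if such a segment is present, one of its endpoints is $a$.
   Context: Fix the anticlockwise orientation of $X\cong\mathbb{R}^2$. For a point $a$ on a convex, piecewise $C^1$ Jordan curve $C\subset X$ of $\|\cdot\|_X$-length $L$, $\gamma_a:\mathbb{R}\to C$ denotes the unique anticlockwise, $L$-periodic map with $\gamma_a(0)=a$, injective on $[0,L)$, having one-sided derivatives at every $t$, all of $\|\cdot\|_X$-norm $1$. $C$ is differentiable at $\gamma_a(t)$ iff the one-sided derivatives of $\gamma_a$ at $t$ coincide. A norm is strictly convex if its unit sphere contains no nontrivial segment. *)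

From Stdlib Require Import Reals Lra List.
From Coquelicot Require Import Coquelicot.
Open Scope R_scope.

Definition pt := (R * R)%type.
Definition padd (x y : pt) : pt := (fst x + fst y, snd x + snd y).
Definition psub (x y : pt) : pt := (fst x - fst y, snd x - snd y).
Definition pscal (c : R) (x : pt) : pt := (c * fst x, c * snd x).
(* Euclidean length, only used to express (norm-independent) topology *)
Definition enorm (x : pt) : R := sqrt (fst x ^ 2 + snd x ^ 2).
Definition det (x y : pt) : R := fst x * snd y - snd x * fst y.

Definition is_norm (N : pt -> R) : Prop :=
  (forall x, N x = 0 <-> x = (0, 0)) /\
  (forall c x, N (pscal c x) = Rabs c * N x) /\
  (forall x y, N (padd x y) <= N x + N y).

Definition strictly_convex (N : pt -> R) : Prop :=
  ~ (exists x y : pt, x <> y /\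
       forall l, 0 <= l <= 1 -> N (padd (pscal (1 - l) x) (pscal l y)) = 1).

Definition differentiable2 (f : pt -> R) (x : pt) : Prop :=
  exists p q : R, forall eps, 0 < eps -> exists delta, 0 < delta /\
    forall h : pt, 0 < enorm h < delta ->
      Rabs (f (padd x h) - f x - (p * fst h + q * snd h)) <= eps * enorm h.

Definition finitely_many_nondiff_on_sphere (N : pt -> R) : Prop :=
  exists l : list pt, forall x, N x = 1 -> ~ differentiable2 N x -> In x l.

Definition is_rderiv (g : R -> pt) (t : R) (v : pt) : Prop :=
  filterlim (fun h => (fst (g (t + h)) - fst (g t)) / h) (at_right 0) (locally (fst v)) /\
  filterlim (fun h => (snd (g (t + h)) - snd (g t)) / h) (at_right 0) (locally (snd v)).
Definition is_lderiv (g : R -> pt) (t : R) (v : pt) : Prop :=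
  filterlim (fun h => (fst (g (t + h)) - fst (g t)) / h) (at_left 0) (locally (fst v)) /\
  filterlim (fun h => (snd (g (t + h)) - snd (g t)) / h) (at_left 0) (locally (snd v)).

Definition C1_on (g : R -> pt) (u v : R) : Prop :=
  exists dg : R -> pt,
    (forall t, u <= t <= v ->
       filterlim dg (within (fun s => u <= s <= v) (locally t)) (locally (dg t))) /\
    (forall t, u < t < v ->
       is_derive (fun s => fst (g s)) t (fst (dg t)) /\
       is_derive (fun s => snd (g s)) t (snd (dg t))) /\
    is_rderiv g u (dg u) /\ is_lderiv g v (dg v).

Definition piecewise_C1 (g : R -> pt) (L : R) : Prop :=
  exists (n : nat) (p : nat -> R), p 0%nat = 0 /\ p n = L /\
    forall i, (i < n)%nat -> p i < p (S i) /\ C1_on g (p i) (p (S i)).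

Definition curve_image (g : R -> pt) (L : R) (x : pt) : Prop :=
  exists t, 0 <= t < L /\ g t = x.

Definition convex_set (K : pt -> Prop) : Prop :=
  forall x y l, K x -> K y -> 0 <= l <= 1 -> K (padd (pscal (1 - l) x) (pscal l y)).

Definition boundary (K : pt -> Prop) (x : pt) : Prop :=
  forall eps, 0 < eps ->
    (exists y, K y /\ enorm (psub y x) < eps) /\
    (exists z, ~ K z /\ enorm (psub z x) < eps).

(* anticlockwise orientation of a convex curve: the enclosed region lies
   to the left of the (right) tangent direction at every point *)
Definition anticlockwise (g : R -> pt) : Prop :=
  forall t v s, is_rderiv g t v -> 0 <= det v (psub (g s) (g t)).

(* g is the map gamma_a of the paper for the convex piecewise C^1 Jordan
   curve C = curve_image g L, with a = g 0 *)
Definition is_gamma (N : pt -> R) (g : R -> pt) (L : R) : Prop :=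
  0 < L /\
  (forall t, g (t + L) = g t) /\
  (forall s t, 0 <= s < L -> 0 <= t < L -> g s = g t -> s = t) /\
  piecewise_C1 g L /\
  (forall t, exists v w, is_rderiv g t v /\ is_lderiv g t w /\ N v = 1 /\ N w = 1) /\
  (exists K, convex_set K /\ forall x, curve_image g L x <-> boundary K x) /\
  anticlockwise g.

Definition segment (a c x : pt) : Prop :=
  exists l, 0 <= l <= 1 /\ x = padd (pscal (1 - l) a) (pscal l c).

(* Let a = g 0 be a point where the convex curve C is differentiable, with
   unit tangent v.  We show that NDif(a) is in fact a finite set, so the
   theorem holds with no segment at all.

   1. For b <> a put y := a - b.  If the norm N has a directional derivative
      at y in the direction v, then t |-> N (g t - b) is derivable at 0: the
      curve agrees with its tangent line a + t v to first order, and N is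
      Lipschitz.  Such a directional derivative exists when y is parallel to
      v (by homogeneity of N) and when N is differentiable at y.
   2. Hence every b <> a in NDif(a) lies on an open ray a - s x (s > 0) where
      x is a unit vector transversal to v at which N is not differentiable;
      by hypothesis there are finitely many such x.
   3. A convex curve meets such a ray at most once: at the nearer point the
      supporting line would contain the ray, while the curve crosses every
      line through a transversal to its tangent.
   So NDif(a) is contained in a plus one chosen point on each of finitely
   many rays, and a finite list enumerating it is obtained by filtering. *)

From Stdlib Require Import Reals List Lra Psatz ClassicalEpsilon Classical.
From Coquelicot Require Import Coquelicot.
Open Scope R_scope.

Lemma pt_eq (x y : pt) : fst x = fst y -> snd x = snd y -> x = y.
Proof. destruct x, y; simpl; intros; subst; reflexivity. Qed.

Lemma det_scal_r v c x : det v (pscal c x) = c * det v x.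
Proof. unfold det, pscal; simpl; ring. Qed.

Lemma parallel_multiple y v : y <> (0, 0) -> det v y = 0 -> exists c, v = pscal c y.
Proof.
  destruct y as [y1 y2], v as [v1 v2]. unfold det; simpl. intros Hy Hdet.
  assert (Q : 0 < y1 ^ 2 + y2 ^ 2).
  { destruct (Req_dec y1 0), (Req_dec y2 0); subst; try (exfalso; apply Hy; reflexivity); nra. }
  exists ((v1 * y1 + v2 * y2) / (y1 ^ 2 + y2 ^ 2)).
  apply pt_eq; simpl; field_simplify_eq; try lra.
  - replace (v1 * y1 ^ 2 + v1 * y2 ^ 2) with (v1 * y1 ^ 2 + y2 * (v2 * y1))
      by (rewrite <- (Rminus_diag_uniq _ _ Hdet); ring). ring.
  - replace (v2 * y1 ^ 2 + v2 * y2 ^ 2) with (y1 * (v1 * y2) + v2 * y2 ^ 2)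
      by (rewrite (Rminus_diag_uniq _ _ Hdet); ring). ring.
Qed.

Lemma det_transversal w x v : w <> (0, 0) -> det w x = 0 -> det v x <> 0 -> det w v <> 0.
Proof.
  destruct w as [w1 w2], x as [x1 x2], v as [v1 v2]. unfold det; simpl.
  intros Hw Hwx Hvx Hwv. apply Hvx.
  assert (E1 : (v1 * x2 - v2 * x1) * w1 = 0).
  { replace ((v1 * x2 - v2 * x1) * w1)
      with (v1 * (w1 * x2 - w2 * x1) - x1 * (w1 * v2 - w2 * v1)) by ring.
    rewrite Hwx, Hwv. ring. }
  assert (E2 : (v1 * x2 - v2 * x1) * w2 = 0).
  { replace ((v1 * x2 - v2 * x1) * w2)
      with (v2 * (w1 * x2 - w2 * x1) - x2 * (w1 * v2 - w2 * v1)) by ring.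
    rewrite Hwx, Hwv. ring. }
  destruct (Rmult_integral _ _ E1) as [? | Z1]; [assumption |].
  destruct (Rmult_integral _ _ E2) as [? | Z2]; [assumption |].
  subst. exfalso. apply Hw. reflexivity.
Qed.

Lemma enorm_scal h v : enorm (pscal h v) = Rabs h * enorm v.
Proof.
  unfold enorm, pscal; cbn [fst snd].
  replace ((h * fst v) ^ 2 + (h * snd v) ^ 2) with (Rsqr h * (fst v ^ 2 + snd v ^ 2))
    by (unfold Rsqr; ring).
  rewrite sqrt_mult; [| apply Rle_0_sqr | nra]. rewrite sqrt_Rsqr_abs. reflexivity.
Qed.

Lemma enorm_pos v : v <> (0, 0) -> 0 < enorm v.
Proof.
  intros H. unfold enorm. apply sqrt_lt_R0. destruct v as [a c]; simpl.
  destruct (Req_dec a 0), (Req_dec c 0); subst; try (exfalso; apply H; reflexivity); nra.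
Qed.

Lemma norm_zero N : is_norm N -> N (0, 0) = 0.
Proof. intros [H0 _]. apply H0; reflexivity. Qed.

Lemma norm_nonneg N u : is_norm N -> 0 <= N u.
Proof.
  intros HN. pose proof (norm_zero N HN) as Z. destruct HN as [_ [Hs Ht]].
  pose proof (Ht u (pscal (-1) u)) as T.
  replace (padd u (pscal (-1) u)) with (0, 0) in T by (apply pt_eq; simpl; ring).
  rewrite Hs, (Rabs_left (-1)) in T by lra. lra.
Qed.

Lemma norm_pos N u : is_norm N -> u <> (0, 0) -> 0 < N u.
Proof.
  intros HN Hu. destruct (norm_nonneg N u HN) as [P | P]; [exact P |].
  exfalso. apply Hu. destruct HN as [H0 _]. apply H0. auto.
Qed.

Lemma norm_rev N u w : is_norm N -> Rabs (N u - N w) <= N (psub u w).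
Proof.
  intros [_ [Hs Ht]]. apply Rabs_le. split.
  - pose proof (Ht u (pscal (-1) (psub u w))) as T.
    replace (padd u (pscal (-1) (psub u w))) with w in T by (apply pt_eq; simpl; ring).
    rewrite Hs, (Rabs_left (-1)) in T by lra. lra.
  - pose proof (Ht w (psub u w)) as T.
    replace (padd w (psub u w)) with u in T by (apply pt_eq; simpl; ring). lra.
Qed.

Lemma norm_bound N u : is_norm N ->
  N u <= (N (1, 0) + N (0, 1)) * (Rabs (fst u) + Rabs (snd u)).
Proof.
  intros HN. pose proof (norm_nonneg N (1, 0) HN). pose proof (norm_nonneg N (0, 1) HN).
  destruct HN as [_ [Hs Ht]].
  replace u with (padd (pscal (fst u) (1, 0)) (pscal (snd u) (0, 1))) at 1
    by (apply pt_eq; simpl; ring).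
  eapply Rle_trans; [apply Ht |]. rewrite !Hs.
  pose proof (Rabs_pos (fst u)). pose proof (Rabs_pos (snd u)). nra.
Qed.

Lemma norm_lipschitz N : is_norm N -> exists K, 0 < K /\ forall u w,
  Rabs (N u - N w) <= K * (Rabs (fst u - fst w) + Rabs (snd u - snd w)).
Proof.
  intros HN. exists (N (1, 0) + N (0, 1) + 1). split.
  { pose proof (norm_nonneg N (1, 0) HN). pose proof (norm_nonneg N (0, 1) HN). lra. }
  intros u w. eapply Rle_trans; [apply (norm_rev N u w HN) |].
  eapply Rle_trans; [apply (norm_bound N (psub u w) HN) |]. simpl.
  pose proof (Rabs_pos (fst u - fst w)). pose proof (Rabs_pos (snd u - snd w)). nra.
Qed.

Definition first_order0 (F : R -> R) (l : R) : Prop :=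
  forall eps, 0 < eps -> exists d, 0 < d /\ forall h, h <> 0 -> Rabs h < d ->
    Rabs (F h - F 0 - h * l) <= eps * Rabs h.

Lemma first_order0_of_onesided F l :
  filterlim (fun h => (F (0 + h) - F 0) / h) (at_right 0) (locally l) ->
  filterlim (fun h => (F (0 + h) - F 0) / h) (at_left 0) (locally l) ->
  first_order0 F l.
Proof.
  intros Hr Hl eps Heps.
  apply filterlim_locally with (eps := mkposreal eps Heps) in Hr.
  apply filterlim_locally with (eps := mkposreal eps Heps) in Hl.
  destruct Hr as [d1 H1]. destruct Hl as [d2 H2].
  exists (Rmin d1 d2). split; [apply Rmin_pos; apply cond_pos |].
  intros h Hh Hd. pose proof (Rmin_l d1 d2). pose proof (Rmin_r d1 d2).
  assert (Hq : Rabs ((F (0 + h) - F 0) / h - l) < eps).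
  { destruct (Rlt_or_le 0 h) as [Hp | Hn].
    - apply (H1 h); [| exact Hp]. change (Rabs (h - 0) < d1). rewrite Rminus_0_r. lra.
    - apply (H2 h); [| lra]. change (Rabs (h - 0) < d2). rewrite Rminus_0_r. lra. }
  rewrite Rplus_0_l in Hq.
  replace (F h - F 0 - h * l) with (h * ((F h - F 0) / h - l)) by (field; auto).
  rewrite Rabs_mult, Rmult_comm. apply Rmult_le_compat_r; [apply Rabs_pos | lra].
Qed.

Lemma is_derive_of_first_order0 F l : first_order0 F l -> is_derive F 0 l.
Proof.
  intros Hf. apply is_derive_Reals. intros eps Heps.
  destruct (Hf (eps / 2)) as [d [Hd Hb]]; [lra |].
  exists (mkposreal d Hd). intros h Hh Hlt. simpl in Hlt. rewrite Rplus_0_l.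
  assert (Hp : 0 < Rabs h) by (apply Rabs_pos_lt; auto).
  specialize (Hb h Hh Hlt).
  replace ((F h - F 0) / h - l) with ((F h - F 0 - h * l) / h) by (field; auto).
  unfold Rdiv. rewrite Rabs_mult, Rabs_inv.
  apply Rmult_lt_reg_r with (Rabs h); [exact Hp |].
  rewrite Rmult_assoc, Rinv_l by lra. nra.
Qed.

Lemma first_order0_lincomb F1 F2 l1 l2 a b :
  first_order0 F1 l1 -> first_order0 F2 l2 ->
  first_order0 (fun h => a * F1 h + b * F2 h) (a * l1 + b * l2).
Proof.
  intros H1 H2 eps Heps.
  set (K := Rabs a + Rabs b + 1).
  assert (HK : 0 < K) by (unfold K; pose proof (Rabs_pos a); pose proof (Rabs_pos b); lra).
  destruct (H1 (eps / K)) as [d1 [P1 Q1]]; [apply Rdiv_lt_0_compat; lra |].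
  destruct (H2 (eps / K)) as [d2 [P2 Q2]]; [apply Rdiv_lt_0_compat; lra |].
  exists (Rmin d1 d2). split; [apply Rmin_pos; auto |].
  intros h Hh Hd. pose proof (Rmin_l d1 d2). pose proof (Rmin_r d1 d2).
  specialize (Q1 h Hh ltac:(lra)). specialize (Q2 h Hh ltac:(lra)).
  replace (a * F1 h + b * F2 h - (a * F1 0 + b * F2 0) - h * (a * l1 + b * l2))
    with (a * (F1 h - F1 0 - h * l1) + b * (F2 h - F2 0 - h * l2)) by ring.
  eapply Rle_trans; [apply Rabs_triang |]. rewrite !Rabs_mult.
  set (e := eps / K * Rabs h).
  assert (He : 0 <= e).
  { apply Rmult_le_pos; [apply Rlt_le, Rdiv_lt_0_compat; lra | apply Rabs_pos]. }
  assert (E : eps * Rabs h = K * e) by (unfold e; field; lra).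
  assert (Rabs a * Rabs (F1 h - F1 0 - h * l1) <= Rabs a * e)
    by (apply Rmult_le_compat_l; [apply Rabs_pos | exact Q1]).
  assert (Rabs b * Rabs (F2 h - F2 0 - h * l2) <= Rabs b * e)
    by (apply Rmult_le_compat_l; [apply Rabs_pos | exact Q2]).
  rewrite E. unfold K. lra.
Qed.

Lemma first_order0_decrease F l : first_order0 F l -> l <> 0 -> exists h, F h < F 0.
Proof.
  intros Hf Hl. pose proof (Rabs_pos_lt l Hl) as Hla.
  destruct (Hf (Rabs l / 2)) as [d [Hd Hb]]; [lra |].
  set (h := if Rlt_dec 0 l then - (d / 2) else d / 2).
  assert (Hh : Rabs h = d / 2 /\ h * l = - (Rabs l * (d / 2))).
  { unfold h. destruct (Rlt_dec 0 l) as [Hp | Hn].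
    - rewrite Rabs_Ropp, !Rabs_pos_eq by lra. split; ring.
    - rewrite Rabs_pos_eq, Rabs_left by lra. split; [reflexivity | ring]. }
  destruct Hh as [Hh1 Hh2]. exists h.
  assert (h <> 0) by (intro Z; rewrite Z, Rabs_R0 in Hh1; lra).
  specialize (Hb h H ltac:(lra)). rewrite Hh1 in Hb.
  pose proof (Rle_abs (F h - F 0 - h * l)). nra.
Qed.

Definition curve_first_order0 (g : R -> pt) (v : pt) : Prop :=
  first_order0 (fun t => fst (g t)) (fst v) /\ first_order0 (fun t => snd (g t)) (snd v).

Lemma curve_first_order0_of_onesided g v :
  is_rderiv g 0 v -> is_lderiv g 0 v -> curve_first_order0 g v.
Proof.
  intros [R1 R2] [L1 L2]. split; apply first_order0_of_onesided; assumption.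
Qed.

Lemma curve_crosses_line g v w : curve_first_order0 g v -> det w v <> 0 ->
  exists h, det w (psub (g h) (g 0)) < 0.
Proof.
  intros [H1 H2] Hwv.
  pose proof (first_order0_lincomb _ _ _ _ (fst w) (- snd w) H2 H1) as Hlin.
  destruct (first_order0_decrease _ _ Hlin) as [h Hh].
  { unfold det in Hwv. intro Z. apply Hwv. lra. }
  exists h. unfold det, psub; simpl. lra.
Qed.

Definition dirdiff (N : pt -> R) (y v : pt) (l : R) : Prop :=
  first_order0 (fun h => N (padd y (pscal h v))) l.

Lemma distance_derivable N g v b l : is_norm N -> curve_first_order0 g v ->
  dirdiff N (psub (g 0) b) v l -> ex_derive (fun t => N (psub (g t) b)) 0.
Proof.
  intros HN [G1 G2] Hd. exists l. apply is_derive_of_first_order0. intros eps Heps.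
  destruct (norm_lipschitz N HN) as [K [HK Lip]].
  destruct (Hd (eps / 2)) as [d1 [P1 Q1]]; [lra |].
  destruct (G1 (eps / (4 * K))) as [d2 [P2 Q2]]; [apply Rdiv_lt_0_compat; lra |].
  destruct (G2 (eps / (4 * K))) as [d3 [P3 Q3]]; [apply Rdiv_lt_0_compat; lra |].
  exists (Rmin d1 (Rmin d2 d3)). split; [repeat apply Rmin_pos; auto |].
  intros h Hh Hlt.
  pose proof (Rmin_l d1 (Rmin d2 d3)). pose proof (Rmin_r d1 (Rmin d2 d3)).
  pose proof (Rmin_l d2 d3). pose proof (Rmin_r d2 d3).
  set (y := psub (g 0) b) in *.
  specialize (Q1 h Hh ltac:(lra)). specialize (Q2 h Hh ltac:(lra)).
  specialize (Q3 h Hh ltac:(lra)). simpl in Q1, Q2, Q3.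
  replace (padd y (pscal 0 v)) with y in Q1 by (apply pt_eq; simpl; ring).
  (* the curve and its tangent line stay o(h)-close, and N is Lipschitz *)
  assert (Hclose : Rabs (N (psub (g h) b) - N (padd y (pscal h v))) <= eps / 2 * Rabs h).
  { eapply Rle_trans; [apply Lip |]. unfold y; simpl.
    replace (fst (g h) - fst b - (fst (g 0) - fst b + h * fst v))
      with (fst (g h) - fst (g 0) - h * fst v) by ring.
    replace (snd (g h) - snd b - (snd (g 0) - snd b + h * snd v))
      with (snd (g h) - snd (g 0) - h * snd v) by ring.
    replace (eps / 2 * Rabs h) with (K * (eps / (4 * K) * Rabs h + eps / (4 * K) * Rabs h))
      by (field; lra).
    apply Rmult_le_compat_l; lra. }
  replace (N (psub (g h) b) - N y - h * l)
    with ((N (psub (g h) b) - N (padd y (pscal h v))) + (N (padd y (pscal h v)) - N y - h * l))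
    by ring.
  eapply Rle_trans; [apply Rabs_triang | lra].
Qed.

(* Along its own line, N is linear near y <> 0 by homogeneity. *)
Lemma dirdiff_radial N y v : is_norm N -> y <> (0, 0) -> det v y = 0 ->
  exists l, dirdiff N y v l.
Proof.
  intros HN Hy Hdet. destruct (parallel_multiple y v Hy Hdet) as [c ->].
  destruct HN as [_ [Hs _]]. exists (c * N y). intros eps Heps.
  pose proof (Rabs_pos c).
  exists (/ (Rabs c + 1)). split; [apply Rinv_0_lt_compat; lra |].
  intros h Hh Hlt.
  replace (padd y (pscal h (pscal c y))) with (pscal (1 + h * c) y)
    by (apply pt_eq; simpl; ring).
  replace (padd y (pscal 0 (pscal c y))) with (pscal 1 y) by (apply pt_eq; simpl; ring).
  assert (Hhc : Rabs (h * c) < 1).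
  { rewrite Rabs_mult. apply Rle_lt_trans with (Rabs h * (Rabs c + 1)).
    - pose proof (Rabs_pos h). nra.
    - apply Rmult_lt_reg_r with (/ (Rabs c + 1)); [apply Rinv_0_lt_compat; lra |].
      rewrite Rmult_assoc, Rinv_r, Rmult_1_l, Rmult_1_r; lra. }
  pose proof (Rle_abs (- (h * c))) as Hneg. rewrite Rabs_Ropp in Hneg.
  rewrite !Hs, Rabs_R1, (Rabs_pos_eq (1 + h * c)) by lra.
  replace ((1 + h * c) * N y - 1 * N y - h * (c * N y)) with 0 by ring.
  rewrite Rabs_R0. pose proof (Rabs_pos h). nra.
Qed.

Lemma dirdiff_of_differentiable2 N y v : differentiable2 N y -> v <> (0, 0) ->
  exists l, dirdiff N y v l.
Proof.
  intros [p [q Hd]] Hv. exists (p * fst v + q * snd v). intros eps Heps.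
  pose proof (enorm_pos v Hv) as Ev.
  destruct (Hd (eps / enorm v)) as [d [Pd Qd]]; [apply Rdiv_lt_0_compat; lra |].
  exists (d / enorm v). split; [apply Rdiv_lt_0_compat; lra |].
  intros h Hh Hlt. assert (Hp : 0 < Rabs h) by (apply Rabs_pos_lt; auto).
  replace (padd y (pscal 0 v)) with y by (apply pt_eq; simpl; ring).
  assert (Hsmall : 0 < enorm (pscal h v) < d).
  { rewrite enorm_scal. split; [nra |].
    apply Rmult_lt_reg_r with (/ enorm v); [apply Rinv_0_lt_compat; lra |].
    rewrite Rmult_assoc, Rinv_r; lra. }
  specialize (Qd (pscal h v) Hsmall). rewrite enorm_scal in Qd. simpl in Qd.
  replace (h * (p * fst v + q * snd v)) with (p * (h * fst v) + q * (h * snd v)) by ring.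
  eapply Rle_trans; [exact Qd |]. right. field. lra.
Qed.

Lemma differentiable2_scale N x c : is_norm N -> differentiable2 N x -> 0 < c ->
  differentiable2 N (pscal c x).
Proof.
  intros [_ [Hs _]] [p [q Hd]] Hc. exists p, q. intros eps Heps.
  destruct (Hd eps Heps) as [d [Pd Qd]]. exists (c * d). split; [nra |].
  intros h Hh. specialize (Qd (pscal (/ c) h)).
  rewrite enorm_scal, Rabs_pos_eq in Qd by (left; apply Rinv_0_lt_compat; lra).
  assert (Hsmall : 0 < / c * enorm h < d).
  { split; [apply Rmult_lt_0_compat; [apply Rinv_0_lt_compat |]; lra |].
    apply Rmult_lt_reg_l with c; auto. rewrite <- Rmult_assoc, Rinv_r, Rmult_1_l; lra. }
  specialize (Qd Hsmall).
  replace (padd (pscal c x) h) with (pscal c (padd x (pscal (/ c) h)))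
    by (apply pt_eq; simpl; field; lra).
  rewrite !Hs, (Rabs_pos_eq c) by lra.
  replace (c * N (padd x (pscal (/ c) h)) - c * N x - (p * fst h + q * snd h))
    with (c * (N (padd x (pscal (/ c) h)) - N x
               - (p * fst (pscal (/ c) h) + q * snd (pscal (/ c) h))))
    by (simpl; field; lra).
  rewrite Rabs_mult, (Rabs_pos_eq c) by lra.
  replace (eps * enorm h) with (c * (eps * (/ c * enorm h))) by (field; lra).
  apply Rmult_le_compat_l; lra.
Qed.

Lemma nondifferentiable_direction N g v b : is_norm N -> curve_first_order0 g v ->
  v <> (0, 0) -> b <> g 0 -> ~ ex_derive (fun t => N (psub (g t) b)) 0 ->
  exists x s, N x = 1 /\ ~ differentiable2 N x /\ det v x <> 0 /\ 0 < s /\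
    b = psub (g 0) (pscal s x).
Proof.
  intros HN Hg Hv Hb Hnd. set (y := psub (g 0) b).
  assert (Hy : y <> (0, 0)).
  { intro Z. apply Hb. unfold y, psub in Z. injection Z; intros.
    apply pt_eq; simpl; lra. }
  assert (Hvy : det v y <> 0).
  { intro D. destruct (dirdiff_radial N y v HN Hy D) as [l Hl].
    exact (Hnd (distance_derivable N g v b l HN Hg Hl)). }
  assert (Hdy : ~ differentiable2 N y).
  { intro D. destruct (dirdiff_of_differentiable2 N y v D Hv) as [l Hl].
    exact (Hnd (distance_derivable N g v b l HN Hg Hl)). }
  pose proof (norm_pos N y HN Hy) as Ny.
  set (x := pscal (/ N y) y).
  assert (Hyx : y = pscal (N y) x) by (unfold x; apply pt_eq; simpl; field; lra).
  exists x, (N y). repeat split.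
  - unfold x. destruct HN as [_ [Hs _]].
    rewrite Hs, Rabs_pos_eq by (left; apply Rinv_0_lt_compat; lra). field. lra.
  - intro D. apply Hdy. rewrite Hyx. apply differentiable2_scale; auto.
  - intro Z. apply Hvy. rewrite Hyx, det_scal_r, Z. ring.
  - exact Ny.
  - rewrite <- Hyx. unfold y. apply pt_eq; simpl; ring.
Qed.

Lemma supporting_direction N g L t : is_gamma N g L ->
  exists w, N w = 1 /\ forall s, 0 <= det w (psub (g s) (g t)).
Proof.
  intros [_ [_ [_ [_ [Hder [_ Hac]]]]]].
  destruct (Hder t) as [w [_ [Hw [_ [Nw _]]]]].
  exists w. split; [exact Nw |]. intro s. exact (Hac t w s Hw).
Qed.

(* Points a - s1 x and a - s2 x of the curve with 0 < s1 < s2 cannot both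
   exist: the supporting line at the nearer one contains the ray, so it is
   transversal to the tangent at a, and the curve would cross it. *)
Lemma ray_no_two_points N g L v x s1 s2 : is_norm N -> is_gamma N g L ->
  curve_first_order0 g v -> det v x <> 0 ->
  curve_image g L (psub (g 0) (pscal s1 x)) -> curve_image g L (psub (g 0) (pscal s2 x)) ->
  0 < s1 -> s1 < s2 -> False.
Proof.
  intros HN HG Hg Hvx [t1 [_ E1]] [t2 [_ E2]] Hs1 Hs12.
  destruct (supporting_direction N g L t1 HG) as [w [Nw Hsup]].
  pose proof (Hsup t2) as A2. pose proof (Hsup 0) as A0.
  rewrite E1, E2 in A2. rewrite E1 in A0.
  (* the supporting line at the nearer point contains the whole ray *)
  assert (Hwx : det w x = 0).
  { unfold det, psub, pscal in A0, A2 |- *; simpl in *. nra. }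
  assert (Hwv : det w v <> 0).
  { apply (det_transversal w x v); auto.
    intro Z. rewrite Z, (norm_zero N HN) in Nw. lra. }
  destruct (curve_crosses_line g v w Hg Hwv) as [h Hh].
  pose proof (Hsup h) as Ah. rewrite E1 in Ah.
  unfold det, psub, pscal in Hwx, Hh, Ah; simpl in *. nra.
Qed.

Lemma ray_meets_curve_once N g L v x s1 s2 : is_norm N -> is_gamma N g L ->
  curve_first_order0 g v -> det v x <> 0 ->
  curve_image g L (psub (g 0) (pscal s1 x)) -> curve_image g L (psub (g 0) (pscal s2 x)) ->
  0 < s1 -> 0 < s2 -> s1 = s2.
Proof.
  intros HN HG Hg Hvx C1 C2 Hs1 Hs2.
  destruct (Rtotal_order s1 s2) as [Hlt | [Heq | Hgt]]; [exfalso | exact Heq | exfalso].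
  - exact (ray_no_two_points N g L v x s1 s2 HN HG Hg Hvx C1 C2 Hs1 Hlt).
  - exact (ray_no_two_points N g L v x s2 s1 HN HG Hg Hvx C2 C1 Hs2 Hgt).
Qed.

Definition ray_point (g : R -> pt) (L : R) (x : pt) : pt :=
  epsilon (inhabits (g 0))
    (fun b => curve_image g L b /\ exists s, 0 < s /\ b = psub (g 0) (pscal s x)).

Lemma ray_point_spec N g L v x s : is_norm N -> is_gamma N g L ->
  curve_first_order0 g v -> det v x <> 0 -> 0 < s ->
  curve_image g L (psub (g 0) (pscal s x)) -> psub (g 0) (pscal s x) = ray_point g L x.
Proof.
  intros HN HG Hg Hvx Hs Hc. unfold ray_point.
  destruct (epsilon_spec (inhabits (g 0))
    (fun b => curve_image g L b /\ exists s, 0 < s /\ b = psub (g 0) (pscal s x)))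
    as [Hc' [s' [Hs' E]]].
  { exists (psub (g 0) (pscal s x)). split; [exact Hc | exists s; split; auto]. }
  rewrite E in Hc' |- *.
  rewrite (ray_meets_curve_once N g L v x s s' HN HG Hg Hvx Hc Hc' Hs Hs'). reflexivity.
Qed.

Lemma enumerate_finite_pred (A : Type) (P : A -> Prop) (l : list A) :
  (forall a, P a -> In a l) -> exists F, forall a, P a <-> In a F.
Proof.
  intros Hl. exists (filter (fun a => if excluded_middle_informative (P a) then true else false) l).
  intro a. rewrite filter_In.
  destruct (excluded_middle_informative (P a)) as [Ha | Ha].
  - split; [intro; split; auto | tauto].
  - split; [tauto | intros [_ F]; discriminate].
Qed.

Lemma tangent_at_start N g L : is_gamma N g L ->
  (forall v w, is_rderiv g 0 v -> is_lderiv g 0 w -> v = w) ->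
  exists v, N v = 1 /\ curve_first_order0 g v.
Proof.
  intros [_ [_ [_ [_ [Hder _]]]]] Hdiff.
  destruct (Hder 0) as [v [w [Hv [Hw [Nv _]]]]].
  rewrite <- (Hdiff v w Hv Hw) in Hw.
  exists v. split; [exact Nv | exact (curve_first_order0_of_onesided g v Hv Hw)].
Qed.

Theorem mainTheorem9 (N : pt -> R) (g : R -> pt) (L : R) :
  is_norm N ->
  strictly_convex N ->
  finitely_many_nondiff_on_sphere N ->
  is_gamma N g L ->
  (* C is differentiable at a = g 0 *)
  (forall v w, is_rderiv g 0 v -> is_lderiv g 0 w -> v = w) ->
  exists (F : list pt) (seg : option pt),
    forall b : pt,
      (curve_image g L b /\ ~ ex_derive (fun t => N (psub (g t) b)) 0) <->
      (In b F \/ match seg with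
                 | Some c => segment (g 0) c b
                 | None => False
                 end).
Proof.
  intros HN _ [nd Hnd] HG Hdiff.
  destruct (tangent_at_start N g L HG Hdiff) as [v [Nv Hg]].
  assert (Hv : v <> (0, 0)) by (intro Z; rewrite Z, (norm_zero N HN) in Nv; lra).
  (* NDif(a) is contained in a together with one ray point per direction of nd *)
  destruct (enumerate_finite_pred pt
    (fun b => curve_image g L b /\ ~ ex_derive (fun t => N (psub (g t) b)) 0)
    (g 0 :: map (ray_point g L) nd)) as [F HF].
  { intros b [Hb Hndb]. destruct (classic (b = g 0)) as [-> | Hne]; [left; reflexivity | right].
    destruct (nondifferentiable_direction N g v b HN Hg Hv Hne Hndb)
      as [x [s [Nx [Dx [Hvx [Hs ->]]]]]].
    apply in_map_iff. exists x. split.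
    - symmetry. exact (ray_point_spec N g L v x s HN HG Hg Hvx Hs Hb).
    - exact (Hnd x Nx Dx). }
  exists F, None. intro b. rewrite HF. tauto.
Qed.
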